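(* Let $\bm{G}_t\in\mathbb{R}^{n_1\times n_2}$ and $\epsilon_t>0$, and let $\bm{L}_t=\epsilon_t\bm{I}_{n_1}+\mathrm{diag}(\bm{G}_t\bm{G}_t^T)$, $\bm{R}_t=\epsilon_t\bm{I}_{n_2}+\mathrm{diag}(\bm{G}_t^T\bm{G}_t)$. Then for every $\bm{Z}\in\mathbb{R}^{n_1\times n_2}$, $$\nu_t\|\bm{Z}\|_F^2\le\|\bm{Z}\|_{\mathcal{W}_t}^2\le\mu_t\|\bm{Z}\|_F^2,$$ where $\nu_t=\epsilon_t^{1/2}$ and $\mu_t=(\epsilon_t+\|\bm{G}_t\|_\vee^2)^{1/2}$.
   Context: $\mathrm{diag}(\bm{M})$ is the diagonal matrix with the diagonal entries of $\bm{M}$. $\|\bm{Z}\|_{\mathcal{W}_t}^2=\langle\bm{L}_t^{1/4}\bm{Z}\bm{R}_t^{1/4},\bm{Z}\rangle$ with $\langle\bm{A},\bm{B}\rangle=\mathrm{trace}(\bm{A}^T\bm{B})$. $\|\bm{Z}\|_\vee=\max\{\max_i\|\bm{Z}(i,:)\|_2,\max_j\|\bm{Z}(:,j)\|_2\}$ (largest Euclidean norm of a row or column). In the paper $\bm{G}_t=\mathcal{A}^*(\mathcal{A}\bm{X}_t-\bm{y})$ is the gradient at the current iterate. *)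

From HB Require Import structures.
From mathcomp Require Import all_boot all_order all_algebra.
Set Implicit Arguments. Unset Strict Implicit. Unset Printing Implicit Defensive.
Import Order.TTheory GRing.Theory Num.Theory.
Local Open Scope ring_scope.

Definition diagm {R : ringType} {n : nat} (M : 'M[R]_n) : 'M[R]_n :=
  \matrix_(i, j) (if i == j then M i i else 0).

Definition root4 {R : rcfType} (x : R) : R := Num.sqrt (Num.sqrt x).

(* Principal fourth root of a diagonal positive semidefinite matrix
   (applied only to the diagonal matrices L_t, R_t): entrywise root on the
   diagonal. *)
Definition diag_root4 {R : rcfType} {n : nat} (D : 'M[R]_n) : 'M[R]_n :=
  \matrix_(i, j) (if i == j then root4 (D i i) else 0).

Definition frob_inner {R : ringType} {m n : nat} (A B : 'M[R]_(m, n)) : R :=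
  \tr (A^T *m B).

Definition frob_norm2 {R : ringType} {m n : nat} (Z : 'M[R]_(m, n)) : R :=
  \sum_(i < m) \sum_(j < n) Z i j ^+ 2.

Definition vee_norm {R : rcfType} {m n : nat} (Z : 'M[R]_(m, n)) : R :=
  Num.max (\big[Num.max/0]_(i < m) Num.sqrt (\sum_(j < n) Z i j ^+ 2))
          (\big[Num.max/0]_(j < n) Num.sqrt (\sum_(i < m) Z i j ^+ 2)).

Definition Lmat {R : ringType} {n1 n2 : nat} (eps : R) (G : 'M[R]_(n1, n2)) : 'M[R]_n1 :=
  eps%:M + diagm (G *m G^T).
Definition Rmat {R : ringType} {n1 n2 : nat} (eps : R) (G : 'M[R]_(n1, n2)) : 'M[R]_n2 :=
  eps%:M + diagm (G^T *m G).

Definition W_norm2 {R : rcfType} {n1 n2 : nat} (eps : R) (G Z : 'M[R]_(n1, n2)) : R :=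
  frob_inner (diag_root4 (Lmat eps G) *m Z *m diag_root4 (Rmat eps G)) Z.

From mathcomp Require Import all_boot all_order all_algebra.
From mathcomp Require Import ring.
Set Implicit Arguments. Unset Strict Implicit. Unset Printing Implicit Defensive.
Import Order.TTheory GRing.Theory Num.Theory.
Local Open Scope ring_scope.

(* Since L and R are diagonal, ||Z||_W^2 = sum_ij L_ii^(1/4) R_jj^(1/4) Z_ij^2.
   The diagonal entries are L_ii = eps + ||G(i,:)||^2 and R_jj = eps + ||G(:,j)||^2,
   so they all lie in [eps, eps + ||G||_vee^2]; hence every weight
   L_ii^(1/4) R_jj^(1/4) lies in [eps^(1/2), (eps + ||G||_vee^2)^(1/2)], and the
   weighted sum is squeezed between these multiples of ||Z||_F^2. *)

Lemma diag_root4E (R : rcfType) n (D : 'M[R]_n) :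
  diag_root4 D = diag_mx (\row_i root4 (D i i)).
Proof. by apply/matrixP => i j; rewrite !mxE; case: eqP => [->|]. Qed.

Lemma frob_inner_diag_mx (R : comNzRingType) m n (d1 : 'rV[R]_m) (d2 : 'rV[R]_n)
    (Z : 'M[R]_(m, n)) :
  frob_inner (diag_mx d1 *m Z *m diag_mx d2) Z =
  \sum_(i < m) \sum_(j < n) d1 0 i * d2 0 j * Z i j ^+ 2.
Proof.
rewrite /frob_inner /mxtrace exchange_big; apply: eq_bigr => j _.
rewrite mxE; apply: eq_bigr => i _.
by rewrite mul_mx_diag mul_diag_mx !mxE; ring.
Qed.

Lemma weighted_frob_norm2_bounds (R : realDomainType) m n (w : 'I_m -> 'I_n -> R)
    (lo hi : R) (Z : 'M[R]_(m, n)) :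
  (forall i j, lo <= w i j <= hi) ->
  lo * frob_norm2 Z <= \sum_(i < m) \sum_(j < n) w i j * Z i j ^+ 2
    <= hi * frob_norm2 Z.
Proof.
move=> w_bounds; rewrite /frob_norm2 !mulr_sumr.
apply/andP; split; apply: ler_sum => i _; rewrite mulr_sumr;
  apply: ler_sum => j _; apply: ler_wpM2r; rewrite ?sqr_ge0 //;
  by have /andP[] := w_bounds i j.
Qed.

Lemma root4_ge0 (R : rcfType) (x : R) : 0 <= root4 x.
Proof. exact: sqrtr_ge0. Qed.

Lemma ler_root4 (R : rcfType) : {homo @root4 R : x y / x <= y}.
Proof. by move=> x y xy; do 2!apply: ler_wsqrtr. Qed.

Lemma root4_mul_self (R : rcfType) (x : R) : root4 x * root4 x = Num.sqrt x.
Proof. by rewrite -expr2 sqr_sqrtr // sqrtr_ge0. Qed.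

Lemma root4_mul_bounds (R : rcfType) (lo hi a b : R) :
  lo <= a <= hi -> lo <= b <= hi ->
  Num.sqrt lo <= root4 a * root4 b <= Num.sqrt hi.
Proof.
move=> /andP[loa ahi] /andP[lob bhi]; rewrite -!root4_mul_self.
by apply/andP; split; apply: ler_pM; rewrite ?root4_ge0 ?ler_root4.
Qed.

Lemma vee_norm_ge0 (R : rcfType) m n (G : 'M[R]_(m, n)) : 0 <= vee_norm G.
Proof. by rewrite /vee_norm le_max bigmax_ge_id. Qed.

Lemma vee_norm_trmx (R : rcfType) m n (G : 'M[R]_(m, n)) :
  vee_norm G^T = vee_norm G.
Proof.
rewrite /vee_norm maxC; congr Num.max; apply: eq_bigr => i _;
  by congr Num.sqrt; apply: eq_bigr => j _; rewrite mxE.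
Qed.

Lemma row_norm2_le_vee (R : rcfType) m n (G : 'M[R]_(m, n)) i :
  \sum_(j < n) G i j ^+ 2 <= vee_norm G ^+ 2.
Proof.
have row_ge0 : 0 <= \sum_(j < n) G i j ^+ 2 by apply: sumr_ge0 => j _; exact: sqr_ge0.
rewrite -(sqr_sqrtr row_ge0) lerXn2r ?nnegrE ?sqrtr_ge0 ?vee_norm_ge0 //.
by rewrite /vee_norm le_max (le_bigmax _ (fun i => Num.sqrt _) i).
Qed.

Lemma Lmat_diag (R : nzRingType) n1 n2 (eps : R) (G : 'M[R]_(n1, n2)) i :
  Lmat eps G i i = eps + \sum_(k < n2) G i k ^+ 2.
Proof.
rewrite /Lmat /diagm !mxE eqxx mulr1n; congr (_ + _).
by apply: eq_bigr => k _; rewrite mxE expr2.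
Qed.

Lemma Rmat_trmx (R : nzRingType) n1 n2 (eps : R) (G : 'M[R]_(n1, n2)) :
  Rmat eps G = Lmat eps G^T.
Proof. by rewrite /Rmat /Lmat trmxK. Qed.

Lemma Lmat_diag_bounds (R : rcfType) n1 n2 (eps : R) (G : 'M[R]_(n1, n2)) i :
  eps <= Lmat eps G i i <= eps + vee_norm G ^+ 2.
Proof.
rewrite Lmat_diag lerDl lerD2l row_norm2_le_vee andbT.
by apply: sumr_ge0 => k _; exact: sqr_ge0.
Qed.

Theorem lemma3p3 (R : rcfType) (n1 n2 : nat) (G : 'M[R]_(n1, n2)) (eps : R)
  (heps : 0 < eps) (Z : 'M[R]_(n1, n2)) :
  Num.sqrt eps * frob_norm2 Z <= W_norm2 eps G Z /\
  W_norm2 eps G Z <= Num.sqrt (eps + vee_norm G ^+ 2) * frob_norm2 Z.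
Proof.
apply/andP; rewrite /W_norm2 !diag_root4E frob_inner_diag_mx.
apply: weighted_frob_norm2_bounds => i j; rewrite [_ 0 i]mxE [_ 0 j]mxE.
apply: root4_mul_bounds; first exact: Lmat_diag_bounds.
by rewrite Rmat_trmx -(vee_norm_trmx G) Lmat_diag_bounds.
Qed.
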